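(* Let $T\ge1$ and $0<\eta\le\frac{1}{5\sqrt T}$, and suppose $d:=\max\{25\eta^2T^2,1\}$ is a positive integer. Define $f:\mathbb R^d\to\mathbb R$ by $$f(w)=\max\Big\{0,\ \max_{i\in[d]}\Big(\frac{1}{\sqrt d}-w[i]-\frac{\eta i}{4d}\Big)\Big\},$$ where $w[i]$ is the $i$-th coordinate of $w$. Consider unprojected GD $w_1=0$, $w_{t+1}=w_t-\eta\nabla f(w_t)$, $1\le t<T$. Then for every $t\in[T]$: (i) $w_t[i]\le\frac{1}{2\sqrt d}$ for all $i\in[d]$; (ii) there is an index $j_t\in[d]$ such that for all $k\ne j_t$, $\frac{1}{\sqrt d}-w_t[j_t]-\frac{\eta j_t}{4d}>\frac{1}{\sqrt d}-w_t[k]-\frac{\eta k}{4d}+\frac{\eta}{8d}$; (iii) $\frac{1}{\sqrt d}-w_t[j_t]-\frac{\eta j_t}{4d}>\frac{\eta}{8d}$. In particular $f$ is differentiable at each $w_t$ with $\nabla f(w_t)=-e_{j_t}$, so the iterates are well defined.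
   Context: $e_j$ denotes the $j$-th standard basis vector of $\mathbb R^d$. *)

From HB Require Import structures.
From mathcomp Require Import all_boot all_order all_algebra.
From mathcomp Require Import all_classical all_reals all_analysis.
Set Implicit Arguments. Unset Strict Implicit. Unset Printing Implicit Defensive.
Import Order.TTheory GRing.Theory Num.Theory.
Import numFieldNormedType.Exports.
Local Open Scope ring_scope.

(* Vectors of R^d are row vectors 'rV[R]_d; coordinate w[i] (1-based i in [d])
   is w 0 i' with i' : 'I_d and i = i'+1. *)

Definition basis_vec (R : realType) (d : nat) (j : 'I_d) : 'rV[R]_d :=
  delta_mx 0 j.

(* gradient: the vector of partial derivatives, read off the differential 'd f x.
   When f is differentiable at x this is the gradient of f at x. *)
Definition gradient (R : realType) (d : nat) (f : 'rV[R]_d -> R) (x : 'rV[R]_d)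
  : 'rV[R]_d := \row_i ('d f x (basis_vec R i)).

(* the i-th linear piece (i : 'I_d stands for the 1-based index i+1) *)
Definition piece (R : realType) (d : nat) (eta : R) (w : 'rV[R]_d) (i : 'I_d) : R :=
  1 / Num.sqrt (d%:R) - w 0 i - eta * (i.+1)%:R / (4 * d%:R).

Definition hard_f (R : realType) (d : nat) (eta : R) (w : 'rV[R]_d) : R :=
  Num.max 0 (\big[Num.max/0]_(i < d) piece eta w i).

From HB Require Import structures.
From mathcomp Require Import all_boot all_order all_algebra.
From mathcomp Require Import all_classical all_reals all_analysis.
From mathcomp Require Import ring lra zify.
Import Order.TTheory GRing.Theory Num.Theory.
Import numFieldNormedType.Exports.
Local Open Scope ring_scope.
Set Implicit Arguments.
Unset Strict Implicit.
Unset Printing Implicit Defensive.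

(* Starting from 0, gradient descent raises one coordinate by eta per step and
   visits the coordinates cyclically: the coordinates already raised in the
   current round have fallen behind by eta, the others trail by their slope term
   eta * i / (4 d), so the piece of the next coordinate in the cycle beats every
   other piece by at least eta / (8 d).  Since d >= 25 eta^2 T^2, after at most T
   steps the coordinates are still below 1 / (2 sqrt d) and the leading piece is
   still above eta / (8 d); hence f agrees near w_t with that affine piece, whose
   gradient is -e_j, and the cyclic pattern propagates. *)

Lemma near_affine_differentiable (R : numFieldType) (V W : normedModType R)
    (f : V -> W) (x : V) (L : {linear V -> W}) :
  continuous L -> (\forall y \near x, f y = f x + L (y - x)) ->
  differentiable f x /\ 'd f x = L :> (V -> W).
Proof.
move=> Lc fE.
have fo : f \o shift x = cst (f x) + L +o_ (0 : V) id.
  apply/eqaddoP => eps eps0; rewrite (near_shift 0) subr0 in fE.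
  near=> h; rewrite !fctE.
  have -> : f (h + x) = f x + L (h + x - x) by near: h; exact: filterS fE.
  by rewrite addrK subrr normr0 mulr_ge0 // ltW.
have dfE := diff_unique Lc fo.
by split=> //; apply/diff_locallyP; rewrite dfE.
Unshelve. all: by end_near. Qed.

Section HardFunction.
Variables (R : realType) (d : nat) (eta : R).
Implicit Types (x : 'rV[R]_d) (j k : 'I_d).

Definition neg_coord j (v : 'rV[R]_d) : R := - v 0 j.

Lemma neg_coord_is_linear j : linear (neg_coord j).
Proof. by move=> a u v; rewrite /neg_coord !mxE scalerN opprD. Qed.

HB.instance Definition _ j :=
  GRing.isLinear.Build R 'rV[R]_d R *:%R (neg_coord j) (neg_coord_is_linear j).

Lemma neg_coord_continuous j : continuous (neg_coord j).
Proof.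
by move=> x; rewrite /neg_coord; exact: (cvgN (@coord_continuous R 1 d 0 j x)).
Qed.

Lemma hard_f_eq_piece x j : 0 < piece eta x j ->
  (forall k, k != j -> piece eta x k < piece eta x j) ->
  hard_f eta x = piece eta x j.
Proof.
move=> pj_gt0 pj_max; rewrite /hard_f max_r.
  apply/le_anti; rewrite le_bigmax andbT.
  by apply: bigmax_le => [|k _]; [exact: ltW | case: (eqVneq k j) => [->|/pj_max/ltW]].
by apply: le_trans (le_bigmax _ _ j); exact: ltW.
Qed.

(* Coordinates move by less than m/2 on the ball of radius m/2, so a piece
   dominating everything by a margin m still dominates there. *)
Lemma hard_f_near_affine x j m : 0 < m -> m < piece eta x j ->
  (forall k, k != j -> piece eta x k + m < piece eta x j) ->
  \forall y \near x, hard_f eta y = hard_f eta x + neg_coord j (y - x).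
Proof.
move=> m_gt0 pj_gt pj_gap.
have coord_near y i : ball x (m / 2) y -> - (m / 2) < x 0 i - y 0 i < m / 2.
  by case=> _ /(_ 0 i); rewrite /ball /= ltr_norml.
apply/nbhs_ballP; exists (m / 2); first by rewrite /= divr_gt0.
move=> y xy; have /andP[yj1 yj2] := coord_near y j xy.
rewrite /= (@hard_f_eq_piece x j) ?(@hard_f_eq_piece y j); first last.
- by move=> k /pj_gap; lra.
- lra.
- move=> k /pj_gap; have /andP[] := coord_near y k xy; rewrite /piece; lra.
- by move: pj_gt; rewrite /piece; lra.
by rewrite /piece /neg_coord !mxE; lra.
Qed.

Lemma hard_f_gradient x j m : 0 < m -> m < piece eta x j ->
  (forall k, k != j -> piece eta x k + m < piece eta x j) ->
  differentiable (hard_f eta) x /\ gradient (hard_f eta) x = - basis_vec R j.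
Proof.
move=> m_gt0 pj_gt pj_gap.
have [fdiff dfE] := near_affine_differentiable (@neg_coord_continuous j)
  (hard_f_near_affine m_gt0 pj_gt pj_gap).
split=> //; apply/rowP => i.
by rewrite /gradient /basis_vec mxE dfE /= /neg_coord !mxE eq_sym.
Qed.

End HardFunction.

(* [n %/ d + (i < n %% d)] counts the visits of coordinate [i] during the first
   [n] steps of the cyclic schedule [0, 1, ..., d-1, 0, ...]; step [n] visits
   [n %% d]. *)
Lemma cyclic_visitsS d n i : (0 < d)%N -> (i < d)%N ->
  (n %/ d + (i < n %% d) + (n %% d == i) = n.+1 %/ d + (i < n.+1 %% d))%N.
Proof.
move=> d_gt0 i_lt_d; have r_lt_d := ltn_pmod n d_gt0.
have d_dvdS : (d %| n.+1)%N = ((n %% d).+1 == d).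
  rewrite /dvdn {1}(divn_eq n d) -addnS modnMDl.
  case: (ltngtP (n %% d).+1 d) r_lt_d => // [r_lt _|-> _].
    by rewrite modn_small.
  by rewrite modnn.
rewrite divnS // modnS d_dvdS.
case: (eqVneq (n %% d).+1 d) => [r_last|_] /=; last by rewrite ltnS; case: ltngtP; lia.
have : (i <= n %% d)%N by rewrite -ltnS r_last.
by case: ltngtP => //= _ _; lia.
Qed.

Section ParameterBounds.
Variables (R : rcfType) (T : nat) (eta : R) (d : nat).
Hypotheses (T_ge1 : (1 <= T)%N) (eta_gt0 : 0 < eta)
  (eta_le : eta <= 1 / (5 * Num.sqrt T%:R))
  (dE : d%:R = Num.max (25 * eta ^+ 2 * T%:R ^+ 2) 1).

Local Notation u := (Num.sqrt (d%:R : R)).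

Lemma dim_gt0 : (0 < d)%N.
Proof. by rewrite -(ler1n R) dE le_max lexx orbT. Qed.

Lemma eta_sq_horizon_le1 : 25 * eta ^+ 2 * T%:R <= 1.
Proof.
have v_gt0 : 0 < Num.sqrt (T%:R : R) by rewrite sqrtr_gt0 ltr0n.
have vv : Num.sqrt (T%:R : R) ^+ 2 = T%:R by rewrite sqr_sqrtr ?ler0n.
have ev_ge0 : 0 <= eta * Num.sqrt (T%:R : R) by rewrite mulr_ge0 // ltW.
rewrite -vv; move: eta_le; rewrite ler_pdivlMr ?mulr_gt0 //; nra.
Qed.

Lemma horizon_le_sqrt_dim : 5 * eta * T%:R <= u.
Proof.
have u_gt0 : 0 < u by rewrite sqrtr_gt0 ltr0n dim_gt0.
have : 25 * eta ^+ 2 * T%:R ^+ 2 <= u * u.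
  by rewrite -expr2 sqr_sqrtr ?ler0n // dE le_max lexx.
nra.
Qed.

Lemma eta_sqrt_dim_le1 : 5 * eta * u <= 1.
Proof.
have eta2_ge0 : 0 <= 25 * eta ^+ 2 by rewrite mulr_ge0 ?sqr_ge0.
have : (5 * eta * u) ^+ 2 <= 1.
  have -> : (5 * eta * u) ^+ 2 = 25 * eta ^+ 2 * (u * u) by ring.
  rewrite -expr2 sqr_sqrtr ?ler0n // dE; case: (leP (25 * eta ^+ 2 * T%:R ^+ 2) 1) => _.
    rewrite mulr1; apply: le_trans eta_sq_horizon_le1.
    by rewrite ler_peMr // ler1n.
  have -> : 25 * eta ^+ 2 * (25 * eta ^+ 2 * T%:R ^+ 2) =
    (25 * eta ^+ 2 * T%:R) ^+ 2 by ring.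
  by rewrite expr_le1 // ?eta_sq_horizon_le1 // mulr_ge0.
by rewrite expr_le1 // mulr_ge0 ?sqrtr_ge0 // mulr_ge0 // ltW.
Qed.

End ParameterBounds.

Section CyclicIterates.
Variables (R : realType) (T : nat) (eta : R) (d : nat).
Hypotheses (eta_gt0 : 0 < eta) (d_gt0 : (0 < d)%N)
  (horizon_le : 5 * eta * T%:R <= Num.sqrt d%:R)
  (eta_sqrt_le1 : 5 * eta * Num.sqrt d%:R <= 1).

Local Notation u := (Num.sqrt (d%:R : R)).

Lemma sqrt_dim_gt0 : 0 < u.
Proof. by rewrite sqrtr_gt0 ltr0n. Qed.

Lemma sqrt_dim_sq : u * u = d%:R.
Proof. by rewrite -expr2 sqr_sqrtr ?ler0n. Qed.

(* [cyclic_iterate n] is the iterate w_(n+1); its step raises coordinate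
   [active_coord n]. *)
Definition cyclic_iterate n : 'rV[R]_d :=
  \row_i (eta * (n %/ d + (i < n %% d))%:R).

Definition active_coord n : 'I_d := Ordinal (ltn_pmod n d_gt0).

Lemma active_coord_val n : active_coord n = (n %% d)%N :> nat.
Proof. by []. Qed.

Local Notation margin := (eta / (8 * d%:R)).

Lemma margin_gt0 : 0 < margin.
Proof. by rewrite divr_gt0 // mulr_gt0 // ltr0n d_gt0. Qed.

Lemma margin_dim : margin * d%:R = eta / 8.
Proof. by field; rewrite pnatr_eq0 -lt0n d_gt0. Qed.

Lemma piece_cyclic_iterate n i : piece eta (cyclic_iterate n) i =
  u^-1 - eta * ((n %/ d)%:R + (i < n %% d)%:R) - 2 * margin * ((i : nat)%:R + 1).
Proof.
rewrite /piece mxE natrD natr1 div1r; congr (_ - _).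
by field; rewrite pnatr_eq0 -lt0n d_gt0.
Qed.

Lemma cyclic_iterate_le n : (n < T)%N ->
  forall i, cyclic_iterate n 0 i <= 1 / (2 * u).
Proof.
move=> n_lt_T i; have u_gt0 := sqrt_dim_gt0.
have q_term : eta * (n %/ d)%:R <= 1 / (5 * u).
  rewrite ler_pdivlMr ?mulr_gt0 // -(ler_pM2r u_gt0) mul1r.
  apply: le_trans horizon_le.
  have -> : eta * (n %/ d)%:R * (5 * u) * u = 5 * eta * ((n %/ d)%:R * (u * u)).
    by ring.
  rewrite ler_pM2l ?mulr_gt0 // sqrt_dim_sq -natrM ler_nat.
  exact: leq_trans (leq_trunc_div n d) (ltnW n_lt_T).
have b_term : eta * (i < n %% d)%:R <= 1 / (5 * u).
  rewrite ler_pdivlMr ?mulr_gt0 //; apply: le_trans eta_sqrt_le1.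
  have -> : eta * (i < n %% d)%:R * (5 * u) = 5 * eta * u * (i < n %% d)%:R.
    by ring.
  apply: ler_piMr; last by case: ltnP.
  by rewrite !mulr_ge0 ?ler0n ?ltW.
rewrite mxE natrD mulrDr; apply: le_trans (lerD q_term b_term) _.
have -> : 1 / (5 * u) + 1 / (5 * u) = 4 / 5 * (1 / (2 * u)).
  by field; rewrite gt_eqF.
apply: ler_piMl; first by rewrite divr_ge0 ?mulr_ge0 ?ltW.
by rewrite ler_pdivrMr ?ltr0n // mul1r ler_nat.
Qed.

Lemma cyclic_iterate_gap n k : k != active_coord n ->
  piece eta (cyclic_iterate n) k + margin < piece eta (cyclic_iterate n) (active_coord n).
Proof.
rewrite -val_eqE /= => k_ne_r.
rewrite !piece_cyclic_iterate active_coord_val ltnn addr0.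
have m_gt0 := margin_gt0; have md := margin_dim.
case: ltngtP k_ne_r => // [k_lt_r|r_lt_k] _; rewrite ?mulr1n ?mulr0n ?addr0.
  have : margin * (n %% d)%:R <= margin * ((k : nat)%:R + d%:R - 1).
    apply: ler_wpM2l; first exact: ltW.
    rewrite lerBrDr natr1 -natrD ler_nat.
    by have := ltn_pmod n d_gt0; lia.
  have := eta_gt0; lra.
have : margin * ((n %% d)%:R + 1) <= margin * (k : nat)%:R.
  apply: ler_wpM2l; first exact: ltW.
  by rewrite natr1 ler_nat.
have := eta_gt0; lra.
Qed.

Lemma cyclic_iterate_active_gt n : (n < T)%N ->
  margin < piece eta (cyclic_iterate n) (active_coord n).
Proof.
move=> n_lt_T; rewrite piece_cyclic_iterate active_coord_val ltnn addr0.
have m_gt0 := margin_gt0; have u_gt0 := sqrt_dim_gt0.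
have d_neq0 : d%:R != 0 :> R by rewrite pnatr_eq0 -lt0n.
have below_horizon :
    margin * ((n %/ d)%:R * d%:R + (n %% d)%:R + 1) <= margin * T%:R.
  apply: ler_wpM2l; first exact: ltW.
  by rewrite -natrM -natrD natr1 ler_nat -divn_eq.
have horizon_small : 8 * margin * T%:R <= u^-1 / 5.
  have -> : u^-1 / 5 = u / (5 * d%:R).
    by rewrite -[X in _ = _ / (_ * X)]sqrt_dim_sq; field; rewrite gt_eqF.
  have -> : 8 * margin * T%:R = 5 * eta * T%:R / (5 * d%:R) by field.
  by rewrite ler_pM2r ?invr_gt0 ?mulr_gt0 ?ltr0n.
have q_ge0 : 0 <= margin * (n %/ d)%:R * d%:R by rewrite !mulr_ge0 // ltW.
have r_ge0 : 0 <= margin * (n %% d)%:R by rewrite mulr_ge0 // ltW.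
have -> : eta * (n %/ d)%:R = 8 * (margin * (n %/ d)%:R * d%:R) by field.
have : 0 < u^-1 by rewrite invr_gt0.
lra.
Qed.

Lemma cyclic_iterate_gradient n : (n < T)%N ->
  differentiable (hard_f eta) (cyclic_iterate n) /\
  gradient (hard_f eta) (cyclic_iterate n) = - basis_vec R (active_coord n).
Proof.
move=> n_lt_T.
exact: hard_f_gradient margin_gt0 (cyclic_iterate_active_gt n_lt_T)
  (@cyclic_iterate_gap n).
Qed.

Lemma cyclic_iterate_step n : (n < T)%N ->
  cyclic_iterate n - eta *: gradient (hard_f eta) (cyclic_iterate n) =
  cyclic_iterate n.+1.
Proof.
move=> n_lt_T; have [_ ->] := cyclic_iterate_gradient n_lt_T.
apply/rowP => i; rewrite !mxE -(cyclic_visitsS n d_gt0 (ltn_ord i)) natrD.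
rewrite -val_eqE /= eq_sym; ring.
Qed.

Lemma cyclic_iterate_spec n : (n < T)%N ->
  [/\ (forall i, cyclic_iterate n 0 i <= 1 / (2 * u)),
      (forall k, k != active_coord n ->
         piece eta (cyclic_iterate n) k + margin < piece eta (cyclic_iterate n) (active_coord n)),
      margin < piece eta (cyclic_iterate n) (active_coord n),
      differentiable (hard_f eta) (cyclic_iterate n) &
      gradient (hard_f eta) (cyclic_iterate n) = - basis_vec R (active_coord n)].
Proof.
move=> n_lt_T; have [f_diff f_grad] := cyclic_iterate_gradient n_lt_T.
split=> //.
- exact: cyclic_iterate_le.
- exact: cyclic_iterate_gap.
- exact: cyclic_iterate_active_gt.
Qed.

Variable w : nat -> 'rV[R]_d.
Hypotheses (w1 : w 1%N = 0)
  (w_step : forall t, (1 <= t)%N -> (t < T)%N ->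
     w t.+1 = w t - eta *: gradient (hard_f eta) (w t)).

Lemma gd_cyclic_iterate n : (n < T)%N -> w n.+1 = cyclic_iterate n.
Proof.
elim: n => [_|n IH n_lt_T].
  by rewrite w1; apply/rowP => i; rewrite !mxE div0n mod0n ltn0 mulr0.
by rewrite w_step // IH ?cyclic_iterate_step // ltnW.
Qed.

End CyclicIterates.

Theorem mainTheorem12 (R : realType) (T : nat) (eta : R) (d : nat)
  (w : nat -> 'rV[R]_d) :
  (1 <= T)%N ->
  0 < eta -> eta <= 1 / (5 * Num.sqrt (T%:R)) ->
  d%:R = Num.max (25 * eta ^+ 2 * (T%:R) ^+ 2) 1 ->
  w 1%N = 0 ->
  (forall t : nat, (1 <= t)%N -> (t < T)%N ->
     w t.+1 = w t - eta *: gradient (hard_f eta) (w t)) ->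
  forall t : nat, (1 <= t)%N -> (t <= T)%N ->
    exists j : 'I_d,
      [/\ (forall i : 'I_d, w t 0 i <= 1 / (2 * Num.sqrt (d%:R))),
          (forall k : 'I_d, k != j ->
             piece eta (w t) j > piece eta (w t) k + eta / (8 * d%:R)),
          piece eta (w t) j > eta / (8 * d%:R),
          differentiable (hard_f eta) (w t) &
          gradient (hard_f eta) (w t) = - basis_vec R j].
Proof.
move=> T_ge1 eta_gt0 eta_le dE w1 w_step [//|n] _ n_lt_T.
have d_gt0 := dim_gt0 dE.
have horizon_le := horizon_le_sqrt_dim dE.
have eta_sqrt_le1 := eta_sqrt_dim_le1 T_ge1 eta_gt0 eta_le dE.
rewrite (gd_cyclic_iterate eta_gt0 d_gt0 horizon_le eta_sqrt_le1 w1 w_step n_lt_T).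
exists (active_coord d_gt0 n).
exact: (cyclic_iterate_spec eta_gt0 d_gt0 horizon_le eta_sqrt_le1 n_lt_T).
Qed.
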